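(* Let $p(x,y)$ be a real polynomial with $p(0,0)=0$, $\nabla p(0,0)=(0,0)$, $\dim\operatorname{Co}N_p=2$, such that for every $A\in\mathbb{N}^2$ the main $A$-quasi-homogeneous form of $p$ is nonnegative on $\mathbb{R}^2$. Let $A=(A_1,A_2)\in\mathcal{A}_p$ and suppose that for all $(x,y)$ with $\varphi_1^A(x,y)=0$, $x\neq0$, $y\neq0$ one has $\varphi_2^A(x,y)>0$. Let $x^{\chi_1}y^{\eta_1}$ be the monomial of the main term of $\varphi_2^A$. Then for every $u_0\in U_p(A)$ the system $x\neq0$, $y\neq0$, $x^{-A_2}y^{A_1}=u_0$, $x^{\chi_1}y^{\eta_1}g_2^A(u_0)<0$ has no real solution.
   Context: $\mathbb{N}=\{1,2,\dots\}$; $\mathbb{N}_0^2$ is the set of $(A_1,A_2)\in\mathbb{N}^2$ with $\gcd(A_1,A_2)=1$. $N_p$ is the support of $p$ and $\operatorname{Co}N_p$ its convex hull. For $A\in\mathbb{N}^2$ the main $A$-quasi-homogeneous form of $p$ is the sum of the terms of $p$ whose exponent vectors $k$ minimize $\langle A,k\rangle$ over $N_p$. For $A\in\mathbb{N}_0^2$, with $B_1^A<B_2^A<\dots$ the distinct values of $\langle A,k\rangle$ on $N_p$, $\varphi_i^A$ is the sum of terms of $p$ with $\langle A,k\rangle=B_i^A$. For such a form $\sum_i c_ix^{\gamma_i}y^{\delta_i}$ ($c_i\ne0$, $\gamma_1>\gamma_2>\dots$), its main term is $c_1x^{\gamma_1}y^{\delta_1}$ and its characteristic polynomial is $\sum_ic_iu^{(\gamma_1-\gamma_i)/A_2}$;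 $g_1^A,g_2^A$ are those of $\varphi_1^A,\varphi_2^A$. $\mathcal{A}_p$ is the set of $A\in\mathbb{N}_0^2$ such that $\varphi_1^A$ has at least three terms, $g_1^A\ge0$ on $\mathbb{R}$, and $g_1^A$ has a real root; $U_p(A)$ is the set of real roots of $g_1^A$. *)

(* Real polynomials p(x,y) are represented as
   p : {poly {poly R}} : the outer variable is x, the inner one is y,
   so the coefficient of x^i y^j is (p`_i)`_j. *)
From HB Require Import structures.
From mathcomp Require Import all_boot all_order all_algebra.
From mathcomp Require Import reals.
Set Implicit Arguments. Unset Strict Implicit. Unset Printing Implicit Defensive.
Import Order.TTheory GRing.Theory Num.Theory.
Local Open Scope ring_scope.

Section Defs.
Variable R : realType.

Definition peval (p : {poly {poly R}}) (x y : R) : R := (p.[x%:P]).[y].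

Definition pcoef (p : {poly {poly R}}) (k : nat * nat) : R := (p`_k.1)`_k.2.

Definition supp (p : {poly {poly R}}) : seq (nat * nat) :=
  filter (fun k => pcoef p k != 0)
    [seq (i, j) | i <- iota 0 (size p), j <- iota 0 (size p`_i)].

(* dim Co N_p = 2 : the support contains three affinely independent points *)
Definition hull_dim2 (p : {poly {poly R}}) : Prop :=
  exists k1 k2 k3, [/\ k1 \in supp p, k2 \in supp p & k3 \in supp p] /\
    ((k2.1%:Z - k1.1%:Z) * (k3.2%:Z - k1.2%:Z)
     - (k2.2%:Z - k1.2%:Z) * (k3.1%:Z - k1.1%:Z) != 0)%R.

Definition wt (A k : nat * nat) : nat := (A.1 * k.1 + A.2 * k.2)%N.

Definition qhpart (p : {poly {poly R}}) (A : nat * nat) (B : nat)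
  : {poly {poly R}} :=
  \poly_(i < size p) \poly_(j < size p`_i)
     (if wt A (i, j) == B then (p`_i)`_j else 0).

Definition Bvals (p : {poly {poly R}}) (A : nat * nat) : seq nat :=
  sort leq (undup [seq wt A k | k <- supp p]).

Definition Bmin (p : {poly {poly R}}) (A : nat * nat) : nat :=
  nth 0%N (Bvals p A) 0.

Definition mainform (p : {poly {poly R}}) (A : nat * nat) : {poly {poly R}} :=
  qhpart p A (Bmin p A).

(* phi_n^A for n >= 1 *)
Definition phi (p : {poly {poly R}}) (A : nat * nat) (n : nat)
  : {poly {poly R}} :=
  qhpart p A (nth 0%N (Bvals p A) n.-1).

(* main term exponents (gamma_1, delta_1) : largest x-exponent *)
Definition mt_xexp (f : {poly {poly R}}) : nat := (size f).-1.
Definition mt_yexp (f : {poly {poly R}}) : nat := (size f`_(mt_xexp f)).-1.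

Definition charpoly2 (f : {poly {poly R}}) (A : nat * nat) : {poly R} :=
  \sum_(i < size f) \sum_(j < size f`_i)
     ((f`_i)`_j) *: 'X^((mt_xexp f - i) %/ A.2).

Definition inN02 (A : nat * nat) : bool :=
  [&& 0 < A.1, 0 < A.2 & coprime A.1 A.2]%N.

Definition inAp (p : {poly {poly R}}) (A : nat * nat) : Prop :=
  [/\ inN02 A,
      (3 <= size (supp (phi p A 1)))%N,
      (forall u : R, 0 <= (charpoly2 (phi p A 1) A).[u]) &
      (exists u : R, root (charpoly2 (phi p A 1) A) u)].

Definition inUp (p : {poly {poly R}}) (A : nat * nat) (u : R) : bool :=
  root (charpoly2 (phi p A 1) A) u.

End Defs.

(* A quasi-homogeneous form f of weight A = (A1, A2) with main term
   c x^g y^d only contains monomials x^(g - A2 k) y^(d + A1 k), so for x != 0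
   it factors as f(x, y) = x^g y^d g_f(x^-A2 y^A1), g_f being its
   characteristic polynomial.  Hence if x^-A2 y^A1 = u0 is a root of g_1^A
   then phi_1^A(x, y) = 0, and the hypothesis forces
   0 < phi_2^A(x, y) = x^chi1 y^eta1 g_2^A(u0). *)
From HB Require Import structures.
From mathcomp Require Import all_boot all_order all_algebra.
From mathcomp Require Import reals.
From mathcomp Require Import ring zify.
Set Implicit Arguments. Unset Strict Implicit. Unset Printing Implicit Defensive.
Import Order.TTheory GRing.Theory Num.Theory.
Local Open Scope ring_scope.

Lemma wt_eq_exponents (A : nat * nat) (i j g d : nat) :
  (0 < A.2)%N -> coprime A.1 A.2 -> (i <= g)%N ->
  wt A (i, j) = wt A (g, d) ->
  exists k, g = (i + A.2 * k)%N /\ j = (d + A.1 * k)%N.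
Proof.
rewrite /wt /= => A2_gt0 coA le_ig eq_wt.
have eq_j : (A.2 * j = A.1 * (g - i) + A.2 * d)%N by nia.
have : (A.2 %| g - i)%N.
  rewrite -(Gauss_dvdr _ (_ : coprime A.2 A.1)); last by rewrite coprime_sym.
  by apply/dvdnP; exists (j - d)%N; nia.
case/dvdnP=> k eq_gi; exists k; split; first by nia.
by apply/eqP; rewrite -(eqn_pmul2l A2_gt0); apply/eqP; nia.
Qed.

Section QuasiHomogeneous.
Variable R : realType.
Implicit Types (f : {poly {poly R}}) (A : nat * nat) (x y : R).

Definition is_qhomog f A (B : nat) :=
  forall i j, (f`_i)`_j != 0 -> wt A (i, j) = B.

Lemma qhpart_qhomog (p : {poly {poly R}}) A B : is_qhomog (qhpart p A B) A B.
Proof.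
move=> i j; rewrite /qhpart coef_poly; case: ifP => _; last by rewrite coef0 eqxx.
rewrite coef_poly; case: ifP => _; last by rewrite eqxx.
by case: ifP => [/eqP //|_]; rewrite eqxx.
Qed.

Lemma peval_coef f x y : peval f x y =
  \sum_(i < size f) \sum_(j < size f`_i) (f`_i)`_j * (x ^+ i * y ^+ j).
Proof.
rewrite /peval (horner_coef f) horner_sum; apply: eq_bigr => i _.
rewrite hornerM -polyC_exp hornerC (horner_coef (f`_i)) mulr_suml.
by apply: eq_bigr => j _; ring.
Qed.

Lemma horner_charpoly2 f A u : (charpoly2 f A).[u] =
  \sum_(i < size f) \sum_(j < size f`_i) (f`_i)`_j * u ^+ ((mt_xexp f - i) %/ A.2).
Proof.
rewrite /charpoly2 horner_sum; apply: eq_bigr => i _.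
by rewrite horner_sum; apply: eq_bigr => j _; rewrite hornerZ hornerXn.
Qed.

Lemma mt_coef_neq0 f : f != 0 -> (f`_(mt_xexp f))`_(mt_yexp f) != 0.
Proof.
move=> f_neq0; have lead_neq0 : f`_(mt_xexp f) != 0.
  by rewrite /mt_xexp -lead_coefE lead_coef_eq0.
by rewrite /mt_yexp -lead_coefE lead_coef_eq0.
Qed.

Lemma qhomog_peval f A B x y :
  is_qhomog f A B -> (0 < A.2)%N -> coprime A.1 A.2 -> x != 0 ->
  peval f x y =
    x ^+ mt_xexp f * y ^+ mt_yexp f * (charpoly2 f A).[x ^- A.2 * y ^+ A.1].
Proof.
move=> qf A2_gt0 coA x_neq0.
rewrite peval_coef horner_charpoly2 mulr_sumr; apply: eq_bigr => i _.
rewrite mulr_sumr; apply: eq_bigr => j _.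
have [->|cij_neq0] := eqVneq (f`_i)`_j 0; first by rewrite !mul0r mulr0.
have f_neq0 : f != 0 by rewrite -size_poly_gt0 (leq_ltn_trans _ (ltn_ord i)).
have le_ig : (i <= mt_xexp f)%N by rewrite /mt_xexp -ltnS prednK ?size_poly_gt0.
have [k [-> ->]] := wt_eq_exponents A2_gt0 coA le_ig
  (etrans (qf _ _ cij_neq0) (esym (qf _ _ (mt_coef_neq0 f_neq0)))).
rewrite addKn mulKn // exprMn exprVn -!exprM !exprD.
have : x ^+ (A.2 * k) != 0 by rewrite expf_neq0.
by move=> xk_neq0; field.
Qed.

End QuasiHomogeneous.

Theorem mainTheorem7 (R : realType) (p : {poly {poly R}}) (A : nat * nat) :
  peval p 0 0 = 0 ->
  peval p^`() 0 0 = 0 ->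
  peval (map_poly (fun q : {poly R} => q^`()) p) 0 0 = 0 ->
  hull_dim2 p ->
  (forall A' : nat * nat, (0 < A'.1)%N -> (0 < A'.2)%N ->
     forall x y : R, 0 <= peval (mainform p A') x y) ->
  inAp p A ->
  (forall x y : R, peval (phi p A 1) x y = 0 -> x != 0 -> y != 0 ->
     0 < peval (phi p A 2) x y) ->
  forall u0 : R, inUp p A u0 ->
  ~ (exists x y : R, [/\ x != 0, y != 0,
       x ^- A.2 * y ^+ A.1 = u0 &
       x ^+ mt_xexp (phi p A 2) * y ^+ mt_yexp (phi p A 2)
         * (charpoly2 (phi p A 2) A).[u0] < 0]).
Proof.
move=> _ _ _ _ _ [/and3P[_ A2_gt0 coA] _ _ _] phi2_pos u0 u0_root.
case=> x [y [x_neq0 y_neq0 eq_u0 phi2_neg]].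
have factor B := qhomog_peval y (@qhpart_qhomog R p A B) A2_gt0 coA x_neq0.
have phi1_0 : peval (phi p A 1) x y = 0.
  by rewrite /phi factor eq_u0 (eqP u0_root) mulr0.
have := phi2_pos x y phi1_0 x_neq0 y_neq0.
by rewrite /phi factor eq_u0 -/(phi p A 2) ltNge (ltW phi2_neg).
Qed.
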